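(* Let $L=2U\oplus A_2$. Then $\widetilde{\operatorname{O}}^+(L)$ acts transitively on the set of isotropic lines in $L\otimes\mathbb{Q}$ and transitively on the set of totally isotropic planes in $L\otimes\mathbb{Q}$. Thus the Tits' building $\mathcal{B}(\widetilde{\operatorname{O}}^+(L))$ consists of one line-node and one plane-node joined by one edge.
   Context: $U$ is the hyperbolic plane, $A_2$ the negative definite root lattice; $L$ has signature $(2,4)$. $\widetilde{\operatorname{O}}(L)$ is the kernel of $\operatorname{O}(L)\to\operatorname{O}(L^{\vee}/L)$; the real spinor norm of a product of reflections $\sigma_{w_1}\cdots\sigma_{w_m}$ is $\prod_i(-(w_i,w_i)/2)\in\mathbb{R}^*/(\mathbb{R}^* )^2$, and $\widetilde{\operatorname{O}}^+(L)$ is the subgroup of $\widetilde{\operatorname{O}}(L)$ of spinor norm $1$. For $G\subset\operatorname{O}^+(L\otimes\mathbb{Q})$, the Tits' building $\mathcal{B}(G)$ is the bipartite graph whose nodes are the $G$-orbits of isotropic lines and the $G$-orbits of totally isotropic planes in $L\otimes\mathbb{Q}$, with an edge between the orbit of a line $\ell$ and the orbit of a plane $\Pi$ iff $g\ell\subset\Pi$ for some $g\in G$. *)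

From HB Require Import structures.
From mathcomp Require Import all_boot all_order all_algebra.
From mathcomp Require Import reals.
Set Implicit Arguments. Unset Strict Implicit. Unset Printing Implicit Defensive.
Import GRing.Theory Num.Theory.
Local Open Scope ring_scope.

(* Gram matrix of L = U (+) U (+) A_2 (A_2 negative definite), basis
   e1,f1,e2,f2,a1,a2 :  U = [[0,1],[1,0]],  A_2(-1) = [[-2,1],[1,-2]]. *)
Definition gram_entry (i j : nat) : int :=
  match i, j with
  | 0, 1 | 1, 0 | 2, 3 | 3, 2 => 1
  | 4, 4 | 5, 5 => -2
  | 4, 5 | 5, 4 => 1
  | _, _ => 0
  end.

Definition GramL : 'M[int]_6 := \matrix_(i < 6, j < 6) gram_entry i j.

Definition GramF (F : fieldType) : 'M[F]_6 := map_mx intr GramL.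

Definition bform (F : fieldType) (x y : 'rV[F]_6) : F :=
  (x *m GramF F *m y^T) 0 0.

(* Elements of O(L): integer matrices acting on row vectors x |-> x *m g. *)
Definition in_OL (g : 'M[int]_6) : Prop :=
  g \in unitmx /\ g *m GramL *m g^T = GramL.

Definition gQ (g : 'M[int]_6) : 'M[rat]_6 := map_mx intr g.

Definition integral_row (u : 'rV[rat]_6) : Prop :=
  exists z : 'rV[int]_6, u = map_mx intr z.

Definition in_dual (u : 'rV[rat]_6) : Prop := integral_row (u *m GramF rat).

Definition discr_trivial (g : 'M[int]_6) : Prop :=
  forall u : 'rV[rat]_6, in_dual u -> integral_row (u *m gQ g - u).

(* reflection sigma_w(x) = x - 2 (x,w)/(w,w) w, as a matrix on row vectors *)
Definition reflmx (R : realType) (w : 'rV[R]_6) : 'M[R]_6 :=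
  1%:M - (2 / bform w w) *: (GramF R *m w^T *m w).

Definition spinor_norm_one (R : realType) (g : 'M[int]_6) : Prop :=
  exists s : seq 'rV[R]_6,
    all (fun w => bform w w != 0) s /\
    map_mx intr g = \prod_(w <- s) reflmx w /\
    0 < \prod_(w <- s) (- bform w w / 2).

Definition in_tildeOplus (R : realType) (g : 'M[int]_6) : Prop :=
  in_OL g /\ discr_trivial g /\ spinor_norm_one R g.

(* isotropic lines of L (x) Q, spanned by v *)
Definition isotropic_vec (v : 'rV[rat]_6) : Prop := v != 0 /\ bform v v = 0.

(* totally isotropic planes of L (x) Q, spanned by the rows of A *)
Definition tot_isotropic_plane (A : 'M[rat]_(2, 6)) : Prop :=
  \rank A = 2 /\ A *m GramF rat *m A^T = 0.

(* Two kinds of elements of the form 1 + G N (hence acting trivially on the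
   discriminant group) lie in the group: reflections in roots of norm -2, whose
   spinor norm is 1, and Eichler transvections E(e, c) for isotropic e, which are
   products of two reflections of the same norm 2q.  In the coordinates of
   U + U + A2 they perform the steps of Euclid's algorithm, and the positive
   definite norm of A2 bounds the remainders, so every isotropic integral vector
   is moved to a multiple of e1 by successively clearing its f1-, f2-, A2- and
   e2-coordinates.  For a plane, a first row is moved to e1 and the stabiliser of
   e1 moves the second row into span(e1, e2). *)

From HB Require Import structures.
From mathcomp Require Import all_boot all_order all_algebra.
From mathcomp Require Import reals.
From mathcomp Require Import ring zify.
Set Implicit Arguments. Unset Strict Implicit. Unset Printing Implicit Defensive.
Import GRing.Theory Num.Theory.
Local Open Scope ring_scope.

(** * Bilinear forms, Eichler transvections and root reflections *)

Lemma mx_row_ext (K : nzRingType) n (A B : 'M[K]_n) :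
  (forall x : 'rV_n, x *m A = x *m B) -> A = B.
Proof. by move=> eqAB; apply/row_matrixP => i; rewrite !rowE eqAB. Qed.

Section BilinearForm.
Variables (K : comNzRingType) (n : nat) (G : 'M[K]_n).
Implicit Types (x y z u w e c r : 'rV[K]_n) (g : 'M[K]_n) (q : K).

Definition bf x y : K := (x *m G *m y^T) 0 0.

Lemma bfDl x y z : bf (x + y) z = bf x z + bf y z.
Proof. by rewrite /bf !mulmxDl mxE. Qed.
Lemma bfDr x y z : bf z (x + y) = bf z x + bf z y.
Proof. by rewrite /bf linearD /= mulmxDr mxE. Qed.
Lemma bfZl a x z : bf (a *: x) z = a * bf x z.
Proof. by rewrite /bf -!scalemxAl mxE. Qed.
Lemma bfZr a x z : bf z (a *: x) = a * bf z x.
Proof. by rewrite /bf linearZ /= -scalemxAr mxE. Qed.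
Lemma bfNl x z : bf (- x) z = - bf x z.
Proof. by rewrite -scaleN1r bfZl mulN1r. Qed.
Lemma bfNr x z : bf z (- x) = - bf z x.
Proof. by rewrite -scaleN1r bfZr mulN1r. Qed.
Lemma bfBl x y z : bf (x - y) z = bf x z - bf y z.
Proof. by rewrite bfDl bfNl. Qed.
Lemma bfBr x y z : bf z (x - y) = bf z x - bf z y.
Proof. by rewrite bfDr bfNr. Qed.

Lemma mulmx_bf x u w : x *m G *m u^T *m w = bf x u *: w.
Proof. by rewrite [x *m G *m u^T]mx11_scalar mul_scalar_mx. Qed.

Lemma gram_entry_bf m (M N : 'M[K]_(m, n)) i j :
  (M *m G *m N^T) i j = bf (row i M) (row j N).
Proof.
rewrite /bf !mxE; apply: eq_bigr => k _; rewrite !mxE; congr (_ * _).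
by apply: eq_bigr => l _; rewrite !mxE.
Qed.

Definition isometry_mx g := g *m G *m g^T = G.

Lemma isometry_mxP g :
  isometry_mx g <-> forall x y, bf (x *m g) (y *m g) = bf x y.
Proof.
have entry_delta (M : 'M[K]_n) i j :
    ((delta_mx 0 i : 'rV_n) *m M *m (delta_mx 0 j : 'rV_n)^T) 0 0 = M i j.
  by rewrite -rowE trmx_delta -colE !mxE.
split=> [isog x y | pres].
  by rewrite /bf trmx_mul !mulmxA -(mulmxA _ g) -(mulmxA _ (g *m G)) isog.
apply/matrixP => i j; rewrite -[LHS]entry_delta -[RHS]entry_delta.
have := pres (delta_mx 0 i : 'rV_n) (delta_mx 0 j : 'rV_n); rewrite /bf => <-.
by rewrite trmx_mul !mulmxA.
Qed.

Lemma isometry_mxM g h : isometry_mx g -> isometry_mx h -> isometry_mx (g *m h).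
Proof. by rewrite !isometry_mxP => isog isoh x y; rewrite !mulmxA isoh isog. Qed.

Hypothesis G_sym : G^T = G.

Lemma bfC x y : bf x y = bf y x.
Proof.
have trmx11 (M : 'M[K]_1) : M 0 0 = M^T 0 0 by rewrite mxE.
by rewrite /bf [RHS]trmx11 !trmx_mul trmxK G_sym mulmxA.
Qed.

(* The Eichler transvection E(e, c), for isotropic e and c orthogonal to e;
   the parameter q stands for (c, c) / 2. *)
Definition eichler e c q : 'M_n :=
  1%:M + G *m (e^T *m c - c^T *m e - q *: (e^T *m e)).

Definition rootrefl r : 'M_n := 1%:M + G *m (r^T *m r).

Lemma eichlerE x e c q :
  x *m eichler e c q = x - bf x c *: e + bf x e *: c - (q * bf x e) *: e.
Proof.
rewrite /eichler mulmxDr mulmx1 !mulmxBr -!scalemxAr !mulmxA !mulmx_bf.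
by apply/rowP => i; rewrite !mxE; ring.
Qed.

Lemma rootreflE x r : x *m rootrefl r = x + bf x r *: r.
Proof. by rewrite /rootrefl mulmxDr mulmx1 !mulmxA mulmx_bf. Qed.

Ltac bf_expand := rewrite ?(bfDl, bfDr, bfBl, bfBr, bfZl, bfZr, bfNl, bfNr).

Section Transvection.
Variable e : 'rV[K]_n.
Hypothesis e_iso : bf e e = 0.

Lemma eichler_isometry c q : bf e c = 0 -> bf c c = 2 * q ->
  isometry_mx (eichler e c q).
Proof.
move=> ec cc; apply/isometry_mxP => x y; rewrite !eichlerE; bf_expand.
rewrite ?(bfC c e) ?(bfC e x) ?(bfC e y) ?(bfC c x) ?(bfC c y) ?(bfC y x) e_iso ec cc.
ring.
Qed.

Lemma eichlerM c1 c2 q1 q2 : bf e c1 = 0 -> bf e c2 = 0 ->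
  eichler e c1 q1 *m eichler e c2 q2 = eichler e (c1 + c2) (q1 + q2 + bf c1 c2).
Proof.
move=> ec1 ec2; apply: mx_row_ext => x; rewrite mulmxA !eichlerE; bf_expand.
rewrite ?(bfC c1 e) ?(bfC c2 e) e_iso ec1 ec2.
by apply/rowP => i; rewrite !mxE; ring.
Qed.

Lemma eichler_inv c q : bf e c = 0 -> bf c c = 2 * q ->
  eichler e c q *m eichler e (- c) q = 1%:M.
Proof.
move=> ec cc; have ecN : bf e (- c) = 0 by rewrite bfNr ec oppr0.
rewrite eichlerM // addrN bfNr cc (_ : q + q - 2 * q = 0); last by ring.
by rewrite /eichler !(trmx0, mulmx0, mul0mx, scale0r, subr0) addr0.
Qed.

End Transvection.

Lemma rootrefl_isometry r : bf r r = -2 -> isometry_mx (rootrefl r).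
Proof.
move=> rr; apply/isometry_mxP => x y; rewrite !rootreflE; bf_expand.
by rewrite ?(bfC r x) ?(bfC r y) ?(bfC y x) rr; ring.
Qed.

Lemma rootrefl_invol r : bf r r = -2 -> rootrefl r *m rootrefl r = 1%:M.
Proof.
move=> rr; apply: mx_row_ext => x; rewrite mulmxA !rootreflE mulmx1; bf_expand.
by rewrite rr; apply/rowP => i; rewrite !mxE; ring.
Qed.

End BilinearForm.

Section MapForm.
Variables (K K' : comNzRingType) (f : {rmorphism K -> K'}) (n : nat) (G : 'M[K]_n).

Lemma bf_map x y : bf (map_mx f G) (map_mx f x) (map_mx f y) = f (bf G x y).
Proof. by rewrite /bf map_trmx -!map_mxM mxE. Qed.

Lemma isometry_mx_map g : isometry_mx G g -> isometry_mx (map_mx f G) (map_mx f g).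
Proof. by rewrite /isometry_mx map_trmx -!map_mxM => ->. Qed.

Lemma eichler_map e c q :
  map_mx f (eichler G e c q) = eichler (map_mx f G) (map_mx f e) (map_mx f c) (f q).
Proof.
by rewrite /eichler map_mxD map_mx1 map_mxM !map_mxB map_mxZ !map_mxM !map_trmx.
Qed.

Lemma rootrefl_map r : map_mx f (rootrefl G r) = rootrefl (map_mx f G) (map_mx f r).
Proof. by rewrite /rootrefl map_mxD map_mx1 !map_mxM map_trmx. Qed.

End MapForm.

Lemma GramL_sym : GramL^T = GramL.
Proof.
apply/matrixP => i j; rewrite !mxE.
by case: i j => [[|[|[|[|[|[|?]]]]]] ?] [[|[|[|[|[|[|?]]]]]] ?].
Qed.

Lemma GramF_sym (F : fieldType) : (GramF F)^T = GramF F.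
Proof. by rewrite /GramF map_trmx GramL_sym. Qed.

Lemma bf_GramF (F : fieldType) (x y : 'rV[int]_6) :
  bf (GramF F) (map_mx intr x) (map_mx intr y) = (bf GramL x y)%:~R.
Proof. exact: (bf_map (intr : {rmorphism int -> F})). Qed.

Lemma bformE (F : fieldType) (x y : 'rV[F]_6) : bform x y = bf (GramF F) x y.
Proof. by []. Qed.

Section SpinorNorm.
Variable R : realType.
Local Notation GR := (GramF R).
Local Notation bfR := (bf GR).

Lemma reflmxE w x : x *m reflmx w = x - (2 / bfR w w * bfR x w) *: w.
Proof. by rewrite /reflmx mulmxBr mulmx1 -scalemxAr !mulmxA mulmx_bf scalerA. Qed.

Lemma eichler_reflmx e c q : q != 0 ->
  bfR e e = 0 -> bfR e c = 0 -> bfR c c = 2 * q ->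
  eichler GR e c q = reflmx c *m reflmx (c - q *: e).
Proof.
move=> q0 ee ec cc; have bfC := bfC (GramF_sym R).
apply: mx_row_ext => x; rewrite mulmxA !reflmxE eichlerE.
rewrite ?(bfDl, bfDr, bfBl, bfBr, bfZl, bfZr, bfNl, bfNr).
rewrite ?(bfC c e) ?(bfC e x) ?(bfC c x) ee ec cc.
have two0 : (2 : R) != 0 by rewrite pnatr_eq0.
by apply/rowP => i; rewrite !mxE; field.
Qed.

Lemma rootrefl_reflmx r : bfR r r = -2 -> rootrefl GR r = reflmx r.
Proof.
move=> rr; apply: mx_row_ext => x; rewrite reflmxE rootreflE rr.
have two0 : (2 : R) != 0 by rewrite pnatr_eq0.
by apply/rowP => i; rewrite !mxE; field.
Qed.

Lemma spinor_norm_oneM g h : spinor_norm_one R g -> spinor_norm_one R h ->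
  spinor_norm_one R (g *m h).
Proof.
move=> [s [s_aniso [gs s_pos]]] [t [t_aniso [ht t_pos]]].
exists (s ++ t); rewrite all_cat s_aniso t_aniso map_mxM gs ht !big_cat /=.
by split=> //; split=> //; apply: mulr_gt0.
Qed.

Lemma spinor_norm_one1 : spinor_norm_one R 1%:M.
Proof. by exists [::]; rewrite !big_nil map_mx1 ltr01. Qed.

(* E(e, c) = sigma_c sigma_(c - q e), and both reflections have norm 2q. *)
Lemma spinor_norm_one_eichler (e c : 'rV[int]_6) (q : int) : q != 0 ->
  bf GramL e e = 0 -> bf GramL e c = 0 -> bf GramL c c = 2 * q ->
  spinor_norm_one R (eichler GramL e c q).
Proof.
move=> q0 ee ec cc.
pose eR : 'rV[R]_6 := map_mx intr e; pose cR : 'rV[R]_6 := map_mx intr c.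
pose qR : R := q%:~R.
have eeR : bfR eR eR = 0 by rewrite bf_GramF ee.
have ecR : bfR eR cR = 0 by rewrite bf_GramF ec.
have ccR : bfR cR cR = 2 * qR by rewrite bf_GramF cc intrM.
have c'c' : bfR (cR - qR *: eR) (cR - qR *: eR) = 2 * qR.
  rewrite ?(bfDl, bfDr, bfBl, bfBr, bfZl, bfZr, bfNl, bfNr).
  by rewrite (bfC (GramF_sym R) cR eR) eeR ecR ccR; ring.
have qR0 : qR != 0 by rewrite intr_eq0.
exists [:: cR; cR - qR *: eR]; rewrite /= !bformE ccR c'c' mulf_neq0 ?pnatr_eq0 //.
rewrite (eichler_map (intr : {rmorphism int -> R})) (eichler_reflmx qR0) //.
rewrite !big_cons !big_nil !mulr1 !bformE ccR c'c'; split=> //; split=> //.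
have two0 : (2 : R) != 0 by rewrite pnatr_eq0.
rewrite (_ : - (2 * qR) / 2 = - qR); last by field.
by rewrite mulrNN -expr2 exprn_even_gt0 //= qR0 orbT.
Qed.

Lemma spinor_norm_one_rootrefl (r : 'rV[int]_6) : bf GramL r r = -2 ->
  spinor_norm_one R (rootrefl GramL r).
Proof.
move=> rr; pose rR : 'rV[R]_6 := map_mx intr r.
have rrR : bfR rR rR = -2 by rewrite bf_GramF rr rmorphN.
exists [:: rR]; rewrite /= !big_cons !big_nil !mulr1 !bformE rrR.
rewrite (rootrefl_map (intr : {rmorphism int -> R})) (rootrefl_reflmx rrR).
by rewrite opprK divff ?oppr_eq0 ?pnatr_eq0.
Qed.

End SpinorNorm.

Lemma gQM g h : gQ (g *m h) = gQ g *m gQ h.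
Proof. exact: map_mxM. Qed.

Lemma gQ1 : gQ 1%:M = 1%:M.
Proof. exact: map_mx1. Qed.

Lemma integral_rowD u v : integral_row u -> integral_row v -> integral_row (u + v).
Proof. by move=> [z ->] [z' ->]; exists (z + z'); rewrite map_mxD. Qed.

Lemma integral_row_mulmx u g : integral_row u -> integral_row (u *m gQ g).
Proof. by move=> [z ->]; exists (z *m g); rewrite map_mxM. Qed.

Lemma discr_trivialM g h : discr_trivial g -> discr_trivial h ->
  discr_trivial (g *m h).
Proof.
move=> dg dh u u_dual; rewrite gQM.
have -> : u *m (gQ g *m gQ h) - u = (u *m gQ g - u) *m gQ h + (u *m gQ h - u).
  by rewrite mulmxBl mulmxA addrA subrK.
by apply: integral_rowD; [apply/integral_row_mulmx/dg | apply: dh].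
Qed.

(* [u *m (1 + G N) - u = (u *m G) *m N] is integral for u in the dual lattice. *)
Lemma discr_trivial_1G (N : 'M[int]_6) : discr_trivial (1%:M + GramL *m N).
Proof.
move=> u u_dual; rewrite /gQ map_mxD map_mx1 map_mxM mulmxDr mulmx1 addrC addKr.
by rewrite mulmxA; apply: integral_row_mulmx.
Qed.

Section TildeOplus.
Variable R : realType.
Implicit Types g h : 'M[int]_6.

Lemma in_tildeOplusM g h : in_tildeOplus R g -> in_tildeOplus R h ->
  in_tildeOplus R (g *m h).
Proof.
move=> [[gU gO] [gD gS]] [[hU hO] [hD hS]].
split; [split | split]; first by rewrite unitmx_mul gU hU.
- exact: isometry_mxM.
- exact: discr_trivialM.
- exact: spinor_norm_oneM.
Qed.

Lemma in_tildeOplus1 : in_tildeOplus R 1%:M.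
Proof.
split; [split | split]; first exact: unitmx1.
- by rewrite mul1mx trmx1 mulmx1.
- by move=> u _; rewrite gQ1 mulmx1 subrr; exists 0; rewrite map_mx0.
- exact: spinor_norm_one1.
Qed.

(* Units of the monoid tildeO+(L); working with them avoids proving that
   tildeO+(L) is closed under inverses. *)
Definition tOplus_unit g := exists h,
  [/\ in_tildeOplus R g, in_tildeOplus R h, g *m h = 1%:M & h *m g = 1%:M].

Lemma tOplus_unitM g h : tOplus_unit g -> tOplus_unit h -> tOplus_unit (g *m h).
Proof.
move=> [g' [g_in g'_in gg' g'g]] [h' [h_in h'_in hh' h'h]].
exists (h' *m g'); split; try exact: in_tildeOplusM.
- by rewrite mulmxA -(mulmxA g) hh' mulmx1 gg'.
- by rewrite mulmxA -(mulmxA h') g'g mulmx1 h'h.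
Qed.

Lemma tOplus_unit1 : tOplus_unit 1%:M.
Proof. by exists 1%:M; rewrite mulmx1; split=> //; apply: in_tildeOplus1. Qed.

Lemma tOplus_unit_inv g : tOplus_unit g -> exists h, tOplus_unit h /\ g *m h = 1%:M.
Proof. by move=> [h [g_in h_in gh hg]]; exists h; split=> //; exists g. Qed.

Lemma tOplus_unit_isometry g : tOplus_unit g -> isometry_mx GramL g.
Proof. by move=> [_ [[[_ gO] _] _ _ _]]. Qed.

Lemma tOplus_unit_rootrefl (r : 'rV[int]_6) :
  bf GramL r r = -2 -> tOplus_unit (rootrefl GramL r).
Proof.
move=> rr; have invol := rootrefl_invol rr.
have r_in : in_tildeOplus R (rootrefl GramL r).
  split; [split | split]; first exact: (mulmx1_unit invol).1.
  - exact: (rootrefl_isometry GramL_sym rr).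
  - exact: discr_trivial_1G.
  - exact: spinor_norm_one_rootrefl.
by exists (rootrefl GramL r).
Qed.

Lemma tOplus_unit_eichler_nondeg (e c : 'rV[int]_6) (q : int) : q != 0 ->
  bf GramL e e = 0 -> bf GramL e c = 0 -> bf GramL c c = 2 * q ->
  tOplus_unit (eichler GramL e c q).
Proof.
move=> q0 ee ec cc.
have ecN : bf GramL e (- c) = 0 by rewrite bfNr ec oppr0.
have cNcN : bf GramL (- c) (- c) = 2 * q by rewrite bfNl bfNr opprK.
have E_in c' : bf GramL e c' = 0 -> bf GramL c' c' = 2 * q ->
    in_tildeOplus R (eichler GramL e c' q).
  move=> ec' c'c'; split; [split | split].
  - exact: (mulmx1_unit (eichler_inv GramL_sym ee ec' c'c')).1.
  - exact: (eichler_isometry GramL_sym ee ec' c'c').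
  - exact: discr_trivial_1G.
  - exact: spinor_norm_one_eichler.
exists (eichler GramL e (- c) q); split; try exact: E_in.
- exact (eichler_inv GramL_sym ee ec cc).
- by have := eichler_inv GramL_sym ee ecN cNcN; rewrite opprK.
Qed.

(* For q = 0 the two reflections degenerate; split E(e, c) as
   E(e, c + d) E(e, -d) along a root d orthogonal to e with (c, d) <> 1. *)
Lemma tOplus_unit_eichler (e c a : 'rV[int]_6) (q : int) :
  bf GramL e e = 0 -> bf GramL e c = 0 -> bf GramL c c = 2 * q ->
  bf GramL e a = 0 -> bf GramL a a = -2 ->
  tOplus_unit (eichler GramL e c q).
Proof.
move=> ee ec cc ea aa; have bfC := bfC GramL_sym.
have [q0|q0] := eqVneq q 0; last exact: (tOplus_unit_eichler_nondeg q0 ee ec cc).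
subst q.
have split_root d : bf GramL e d = 0 -> bf GramL d d = -2 -> bf GramL c d != 1 ->
    tOplus_unit (eichler GramL e c 0).
  move=> ed dd cd1.
  have ecd : bf GramL e (c + d) = 0 by rewrite bfDr ec ed addr0.
  have edN : bf GramL e (- d) = 0 by rewrite bfNr ed oppr0.
  rewrite (_ : eichler _ _ _ _ =
      eichler GramL e (c + d) (bf GramL c d - 1) *m eichler GramL e (- d) (-1)).
    apply: tOplus_unitM; apply: tOplus_unit_eichler_nondeg => //.
    - by rewrite subr_eq0.
    - by rewrite !(bfDl, bfDr) cc dd (bfC d c); ring.
    - by rewrite bfNl bfNr opprK dd; ring.
  have q_sum : bf GramL c d - 1 - 1 + bf GramL (c + d) (- d) = 0.
    by rewrite !(bfDl, bfNr) dd; ring.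
  by rewrite eichlerM ?GramL_sym // q_sum addrK.
have [ca1|ca1] := eqVneq (bf GramL c a) 1; last exact: (split_root a).
apply: (split_root (- a)); rewrite ?bfNr ?bfNl ?opprK ?ea ?oppr0 ?ca1 //.
Qed.

End TildeOplus.

(** * Elementary moves in coordinates *)

Definition vecL (x1 y1 x2 y2 a1 a2 : int) : 'rV[int]_6 :=
  \row_(i < 6) nth 0 [:: x1; y1; x2; y2; a1; a2] i.

Lemma vecL_coord (z : 'rV[int]_6) : exists x1 y1 x2 y2 a1 a2,
  z = vecL x1 y1 x2 y2 a1 a2.
Proof.
exists (z 0 (@Ordinal 6 0 isT)), (z 0 (@Ordinal 6 1 isT)), (z 0 (@Ordinal 6 2 isT)),
  (z 0 (@Ordinal 6 3 isT)), (z 0 (@Ordinal 6 4 isT)), (z 0 (@Ordinal 6 5 isT)).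
apply/rowP => -[[|[|[|[|[|[|?]]]]]] ?]; rewrite !mxE //=;
  by congr (z _ _); apply: val_inj.
Qed.

Lemma bf_vecL x1 y1 x2 y2 a1 a2 x1' y1' x2' y2' b1 b2 :
  bf GramL (vecL x1 y1 x2 y2 a1 a2) (vecL x1' y1' x2' y2' b1 b2) =
  x1 * y1' + y1 * x1' + x2 * y2' + y2 * x2'
  - 2 * a1 * b1 + a1 * b2 + a2 * b1 - 2 * a2 * b2.
Proof.
rewrite /bf !mxE !big_ord_recr big_ord0 /= !mxE !big_ord_recr !big_ord0 /= !mxE /=.
ring.
Qed.

Lemma vecL_dotmx x1 y1 x2 y2 a1 a2 x1' y1' x2' y2' b1 b2 :
  vecL x1 y1 x2 y2 a1 a2 *m (vecL x1' y1' x2' y2' b1 b2)^T =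
  (x1 * x1' + y1 * y1' + x2 * x2' + y2 * y2' + a1 * b1 + a2 * b2)%:M.
Proof.
apply/matrixP => i j; rewrite !ord1 !mxE !big_ord_recr big_ord0 /= !mxE /=.
by rewrite mulr1n; ring.
Qed.

Definition e1 := vecL 1 0 0 0 0 0.
Definition e2 := vecL 0 0 1 0 0 0.
Definition rootA := vecL 0 0 0 0 1 0.

Section Reach.
Variable R : realType.

(* [w] lies in the orbit of [v] under the stabiliser of [f];
   [f = 0] imposes no constraint. *)
Definition reach (f v w : 'rV[int]_6) :=
  exists g, [/\ tOplus_unit R g, v *m g = w & f *m g = f].

Lemma reach_refl f v : reach f v v.
Proof. by exists 1%:M; rewrite !mulmx1; split=> //; apply: tOplus_unit1. Qed.

Lemma reach_trans f u v w : reach f u v -> reach f v w -> reach f u w.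
Proof.
move=> [g [g_unit <- fg]] [h [h_unit <- fh]]; exists (g *m h).
by rewrite !mulmxA fg fh; split=> //; apply: tOplus_unitM.
Qed.

Lemma reach0 f v w : reach f v w -> reach 0 v w.
Proof. by move=> [g [g_unit vg _]]; exists g; rewrite mul0mx. Qed.

Lemma reach_norm f v w : reach f v w -> bf GramL w w = bf GramL v v.
Proof.
by move=> [g [/tOplus_unit_isometry/isometry_mxP isog <- _]]; apply: isog.
Qed.

Ltac vecL_eq := rewrite ?eichlerE ?rootreflE !bf_vecL; apply/rowP;
  case => [[|[|[|[|[|[|?]]]]]] ?]; rewrite !mxE //=; ring.

Lemma reach_eichler_e1 x1 y1 x2 y2 a1 a2 s t c1 c2 : exists X,
  reach 0 (vecL x1 y1 x2 y2 a1 a2)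
          (vecL X y1 (x2 + y1 * s) (y2 + y1 * t) (a1 + y1 * c1) (a2 + y1 * c2)).
Proof.
set q := s * t - (c1 * c1 - c1 * c2 + c2 * c2).
exists (x1 - q * y1
  - (x2 * t + y2 * s - 2 * a1 * c1 + a1 * c2 + a2 * c1 - 2 * a2 * c2)).
exists (eichler GramL e1 (vecL 0 0 s t c1 c2) q); rewrite mul0mx; split=> //.
  by apply: (@tOplus_unit_eichler _ _ _ rootA); rewrite !bf_vecL /q; ring.
vecL_eq.
Qed.

Lemma reach_swap_ef1 x1 y1 x2 y2 a1 a2 :
  reach 0 (vecL x1 y1 x2 y2 a1 a2) (vecL y1 x1 x2 y2 a1 a2).
Proof.
exists (rootrefl GramL (vecL 1 (-1) 0 0 0 0)); rewrite mul0mx; split=> //.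
  by apply: tOplus_unit_rootrefl; rewrite bf_vecL.
vecL_eq.
Qed.

Lemma reach_eichler_e2 x1 y1 x2 y2 a1 a2 c1 c2 : exists X,
  reach e1 (vecL x1 y1 x2 y2 a1 a2)
           (vecL x1 y1 X y2 (a1 + y2 * c1) (a2 + y2 * c2)).
Proof.
set q := - (c1 * c1 - c1 * c2 + c2 * c2).
exists (x2 - (- 2 * a1 * c1 + a1 * c2 + a2 * c1 - 2 * a2 * c2) - q * y2).
exists (eichler GramL e2 (vecL 0 0 0 0 c1 c2) q); split.
- by apply: (@tOplus_unit_eichler _ _ _ rootA); rewrite !bf_vecL /q; ring.
- vecL_eq.
- vecL_eq.
Qed.

Lemma reach_swap_ef2 x1 y1 x2 y2 a1 a2 :
  reach e1 (vecL x1 y1 x2 y2 a1 a2) (vecL x1 y1 y2 x2 a1 a2).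
Proof.
exists (rootrefl GramL (vecL 0 0 1 (-1) 0 0)); split.
- by apply: tOplus_unit_rootrefl; rewrite bf_vecL.
- vecL_eq.
- vecL_eq.
Qed.

Lemma reach_eichler_f2 x1 x2 t :
  reach 0 (vecL x1 0 x2 0 0 0) (vecL (x1 + x2 * t) 0 x2 0 0 0).
Proof.
exists (eichler GramL (vecL 0 0 0 1 0 0) (vecL t 0 0 0 0 0) 0); rewrite mul0mx.
split=> //; last by vecL_eq.
by apply: (@tOplus_unit_eichler _ _ _ rootA); rewrite !bf_vecL; ring.
Qed.

Lemma reach_eichler_f1 x1 x2 t :
  reach 0 (vecL x1 0 x2 0 0 0) (vecL x1 0 (x2 + x1 * t) 0 0 0).
Proof.
exists (eichler GramL (vecL 0 1 0 0 0 0) (vecL 0 0 t 0 0 0) 0); rewrite mul0mx.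
split=> //; last by vecL_eq.
by apply: (@tOplus_unit_eichler _ _ _ rootA); rewrite !bf_vecL; ring.
Qed.

End Reach.

(** * Euclidean descent *)

Lemma normA2_bounds (a b m : int) : 0 <= a < m -> 0 <= b < m ->
  0 <= a * a - a * b + b * b < m * m.
Proof.
move=> /andP[a0 am] /andP[b0 bm]; apply/andP; split; first nia.
by have [ab|ba] := lerP a b; nia.
Qed.

Lemma normA2_eq0 (a b : int) : a * a - a * b + b * b = 0 -> a = 0 /\ b = 0.
Proof. by move=> nab; split; nia. Qed.

Lemma abs_lt_of_mul_window (X y P N : int) :
  0 <= P < `|y| * `|y| -> 0 <= N < `|y| * `|y| -> X * y = N - P -> `|X| < `|y|.
Proof. by move=> /andP[? ?] /andP[? ?] ?; nia. Qed.

Lemma modz_bounds (x y : int) : y != 0 -> 0 <= (x %% y)%Z < `|y|.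
Proof. by move=> y0; rewrite modz_ge0 // ltz_mod. Qed.

Lemma addr_mulN_divz (x y : int) : x + y * - (x %/ y)%Z = (x %% y)%Z.
Proof. by rewrite {1}(divz_eq x y); ring. Qed.

Section Descent.
Variable R : realType.
Local Notation reach := (reach R).

(* With r2, ..., r5 the remainders mod y1, isotropy of the image reads
   X y1 = N(r4, r5) - r2 r3, where N is the (positive definite) norm of A2
   and both terms lie in [0, y1^2); hence |X| < |y1|. *)
Lemma descent_f1_step x1 y1 x2 y2 a1 a2 : y1 != 0 ->
  bf GramL (vecL x1 y1 x2 y2 a1 a2) (vecL x1 y1 x2 y2 a1 a2) = 0 ->
  exists X r2 r3 r4 r5, `|X| < `|y1| /\
    reach 0 (vecL x1 y1 x2 y2 a1 a2) (vecL y1 X r2 r3 r4 r5).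
Proof.
move=> y10 iso.
have [X reachX] := reach_eichler_e1 R x1 y1 x2 y2 a1 a2
  (- (x2 %/ y1)%Z) (- (y2 %/ y1)%Z) (- (a1 %/ y1)%Z) (- (a2 %/ y1)%Z).
rewrite !addr_mulN_divz in reachX.
have := reach_norm reachX; rewrite iso bf_vecL.
have := modz_bounds x2 y10; have := modz_bounds y2 y10.
have := modz_bounds a1 y10; have := modz_bounds a2 y10.
move: (x2 %% y1)%Z (y2 %% y1)%Z (a1 %% y1)%Z (a2 %% y1)%Z reachX
  => r2 r3 r4 r5 reachX b5 b4 b3 b2 norm0.
exists X, r2, r3, r4, r5; split; last first.
  exact: reach_trans reachX (reach_swap_ef1 _ _ _ _ _ _ _).
apply: (abs_lt_of_mul_window (P := r2 * r3) (N := r4 * r4 - r4 * r5 + r5 * r5)).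
- by move: b2 b3 => /andP[? ?] /andP[? ?]; apply/andP; split; nia.
- exact: normA2_bounds.
- lia.
Qed.

Lemma descent_f1 x1 y1 x2 y2 a1 a2 :
  bf GramL (vecL x1 y1 x2 y2 a1 a2) (vecL x1 y1 x2 y2 a1 a2) = 0 ->
  exists x1' x2' y2' a1' a2',
    reach 0 (vecL x1 y1 x2 y2 a1 a2) (vecL x1' 0 x2' y2' a1' a2').
Proof.
have [n] := ubnP `|y1|%N; elim: n => // n IH in x1 y1 x2 y2 a1 a2 * => y1n iso.
have [->|y10] := eqVneq y1 0; first by exists x1, x2, y2, a1, a2; apply: reach_refl.
have [X [r2 [r3 [r4 [r5 [Xy1 reach1]]]]]] := descent_f1_step y10 iso.
have iso1 := reach_norm reach1; rewrite iso in iso1.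
have [x1' [x2' [y2' [a1' [a2' reach2]]]]] := IH y1 X r2 r3 r4 r5 ltac:(lia) iso1.
by exists x1', x2', y2', a1', a2'; apply: reach_trans reach1 reach2.
Qed.

Lemma descent_f2_step x1 x2 y2 a1 a2 : y2 != 0 ->
  bf GramL (vecL x1 0 x2 y2 a1 a2) (vecL x1 0 x2 y2 a1 a2) = 0 ->
  exists X r4 r5, `|X| < `|y2| /\
    reach e1 (vecL x1 0 x2 y2 a1 a2) (vecL x1 0 y2 X r4 r5).
Proof.
move=> y20 iso.
have [X reachX] := reach_eichler_e2 R x1 0 x2 y2 a1 a2
  (- (a1 %/ y2)%Z) (- (a2 %/ y2)%Z).
rewrite !addr_mulN_divz in reachX.
have := reach_norm reachX; rewrite iso bf_vecL.
have := modz_bounds a1 y20; have := modz_bounds a2 y20.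
move: (a1 %% y2)%Z (a2 %% y2)%Z reachX => r4 r5 reachX b5 b4 norm0.
exists X, r4, r5; split; last first.
  exact: reach_trans reachX (reach_swap_ef2 _ _ _ _ _ _ _).
apply: (abs_lt_of_mul_window (P := 0) (N := r4 * r4 - r4 * r5 + r5 * r5)).
- by apply/andP; split=> //; nia.
- exact: normA2_bounds.
- lia.
Qed.

Lemma descent_f2 x1 x2 y2 a1 a2 :
  bf GramL (vecL x1 0 x2 y2 a1 a2) (vecL x1 0 x2 y2 a1 a2) = 0 ->
  exists x2', reach e1 (vecL x1 0 x2 y2 a1 a2) (vecL x1 0 x2' 0 0 0).
Proof.
have [n] := ubnP `|y2|%N; elim: n => // n IH in x2 y2 a1 a2 * => y2n iso.
have [y20|y20] := eqVneq y2 0.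
  move: iso; rewrite y20 bf_vecL => iso.
  have [-> ->] : a1 = 0 /\ a2 = 0 by apply: normA2_eq0; lia.
  by exists x2; apply: reach_refl.
have [X [r4 [r5 [Xy2 reach1]]]] := descent_f2_step y20 iso.
have iso1 := reach_norm reach1; rewrite iso in iso1.
have [x2' reach2] := IH y2 X r4 r5 ltac:(lia) iso1.
by exists x2'; apply: reach_trans reach1 reach2.
Qed.

Lemma reach_rotate r b : reach 0 (vecL r 0 b 0 0 0) (vecL b 0 (- r) 0 0 0).
Proof.
have := reach_trans (reach_trans (reach_eichler_f2 R r b 1)
  (reach_eichler_f1 R _ _ (-1))) (reach_eichler_f2 R _ _ 1).
have -> : b + (r + b * 1) * -1 = - r by ring.
by have -> : r + b * 1 + - r * 1 = b by ring.
Qed.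

Lemma descent_e2 x1 x2 : exists d,
  reach 0 (vecL x1 0 x2 0 0 0) (vecL d 0 0 0 0 0).
Proof.
have [n] := ubnP `|x2|%N; elim: n => // n IH in x1 x2 * => x2n.
have [->|x20] := eqVneq x2 0; first by exists x1; apply: reach_refl.
have reach1 := reach_trans (reach_eichler_f2 R x1 x2 (- (x1 %/ x2)%Z))
  (reach_rotate _ x2).
rewrite addr_mulN_divz in reach1.
have /andP[r0 rx2] := modz_bounds x1 x20.
have [d reach2] := IH x2 (- (x1 %% x2)%Z) ltac:(lia).
by exists d; apply: reach_trans reach1 reach2.
Qed.

End Descent.

(** * Isotropic lines and planes of L (x) Q *)

Local Notation bfQ := (bf (GramF rat)).

Lemma row_clear_denominators (v : 'rV[rat]_6) :
  exists (k : int) (z : 'rV[int]_6), k != 0 /\ map_mx intr z = k%:~R *: v.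
Proof.
exists (\prod_(i < 6) denq (v 0 i)).
exists (\row_(i < 6) (numq (v 0 i) * \prod_(j < 6 | j != i) denq (v 0 j))).
split; first by apply/prodf_neq0 => i _; apply: denq_neq0.
apply/rowP => i; rewrite !mxE [X in _ = X%:~R * _](bigD1 i) //=.
by rewrite !intrM numqE; ring.
Qed.

Lemma isotropic_int_row (k : int) (z : 'rV[int]_6) (v : 'rV[rat]_6) :
  map_mx intr z = k%:~R *: v -> bfQ v v = 0 -> bf GramL z z = 0.
Proof.
move=> zkv vv; apply: (@intr_inj rat).
by rewrite -bf_GramF zkv bfZl bfZr vv !mulr0.
Qed.

Definition e1Q : 'rV[rat]_6 := map_mx intr e1.
Definition e2Q : 'rV[rat]_6 := map_mx intr e2.
(* Kept at type 'M_(1 + 1, 6), where the block-matrix lemmas apply. *)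
Definition P0 := col_mx e1Q e2Q.

Lemma map_vecL_e1e2 (a b : int) :
  map_mx intr (vecL a 0 b 0 0 0) = a%:~R *: e1Q + b%:~R *: e2Q.
Proof.
by apply/rowP => -[[|[|[|[|[|[|?]]]]]] ?]; rewrite !mxE /= ?mulr1 ?mulr0 ?addr0 ?add0r.
Qed.

Lemma rank_col_mx_le1 (F : fieldType) n (x y w : 'rV[F]_n) : (x <= w)%MS -> (y <= w)%MS ->
  (\rank (col_mx x y) <= 1)%N.
Proof.
move=> xw yw; apply: leq_trans (rank_leq_row w).
by apply: mxrankS; rewrite col_mx_sub xw yw.
Qed.

Lemma span_e1_e2 (c a b : rat) : c != 0 -> b != 0 ->
  (col_mx (c *: e1Q) (a *: e1Q + b *: e2Q) :=: P0)%MS.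
Proof.
move=> c0 b0; rewrite /P0; apply/eqmxP/andP; split; rewrite col_mx_sub;
  apply/andP; split; rewrite -addsmxE.
- exact/scalemx_sub/addsmxSl.
- by apply: addmx_sub; apply: scalemx_sub; [apply: addsmxSl | apply: addsmxSr].
- rewrite [X in (X <= _)%MS](_ : e1Q = c^-1 *: (c *: e1Q)); last by rewrite scalerK.
  exact/scalemx_sub/addsmxSl.
rewrite [X in (X <= _)%MS](_ : e2Q =
    b^-1 *: ((a *: e1Q + b *: e2Q) + (- a / c) *: (c *: e1Q))); last first.
  by rewrite (scalerA (- a / c)) divfK // scaleNr addrC addKr scalerA mulVf // scale1r.
apply: scalemx_sub; apply: addmx_sub; first exact: addsmxSr.
exact/scalemx_sub/addsmxSl.
Qed.


Lemma P0_rank : \rank P0 = 2.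
Proof.
have P0P0 : P0 *m P0^T = 1%:M.
  have dotQ (x y : 'rV[int]_6) :
      map_mx intr x *m (map_mx (intr : int -> rat) y)^T = map_mx intr (x *m y^T).
    by rewrite map_mxM map_trmx.
  rewrite /P0 tr_col_mx mul_col_row /e1Q /e2Q !dotQ !vecL_dotmx.
  rewrite !(mulr0, mulr1, addr0, add0r) !map_scalar_mx rmorph0 rmorph1.
  by rewrite (scalar_mx_block 1 1 (1 : rat)).
by apply/eqP/row_freeP; exists P0^T.
Qed.

Lemma P0_gram : P0 *m GramF rat *m P0^T = 0.
Proof.
have bf_mx (x y : 'rV[rat]_6) : x *m GramF rat *m y^T = (bfQ x y)%:M.
  exact: mx11_scalar.
rewrite /P0 mul_col_mx tr_col_mx mul_col_row !bf_mx !bf_GramF !bf_vecL /=.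
by rewrite !(mulr0, addr0, subr0) mulr0z !raddf0 block_mx0.
Qed.

Lemma e1Q_sub_P0 : (e1Q <= P0)%MS.
Proof. by rewrite /P0 -addsmxE; apply: addsmxSl. Qed.

Lemma e1Q_isotropic : isotropic_vec e1Q.
Proof.
split; last by rewrite bformE bf_GramF bf_vecL.
by apply/eqP => /rowP /(_ 0); rewrite !mxE.
Qed.

Lemma col_mx_rows2 (T : Type) n (A : 'M[T]_(2, n)) : A = col_mx (row 0 A) (row 1 A).
Proof.
apply/matrixP => i j; rewrite mxE; case: splitP => k ik; rewrite !mxE;
  by congr (A _ _); apply: val_inj; rewrite /= ik ord1.
Qed.

Section NormalForms.
Variable R : realType.

Lemma tOplus_unit_gQ_isometry g : tOplus_unit R g ->
  forall x y, bfQ (x *m gQ g) (y *m gQ g) = bfQ x y.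
Proof.
move=> /tOplus_unit_isometry.
by move=> /(isometry_mx_map (intr : {rmorphism int -> rat}))/isometry_mxP.
Qed.

Lemma tOplus_unit_gQ_row_free g : tOplus_unit R g -> row_free (gQ g).
Proof.
move=> /tOplus_unit_inv[h [_ gh]]; rewrite row_free_unit.
have gQgh : gQ g *m gQ h = 1%:M by rewrite -gQM gh gQ1.
by have [] := mulmx1_unit gQgh.
Qed.

Lemma reach_isotropic_e1 z : bf GramL z z = 0 ->
  exists d, reach R 0 z (vecL d 0 0 0 0 0).
Proof.
have [x1 [y1 [x2 [y2 [a1 [a2 ->]]]]]] := vecL_coord z => iso.
have [x1' [x2' [y2' [a1' [a2' reach1]]]]] := descent_f1 R iso.
have iso1 := reach_norm reach1; rewrite iso in iso1.
have [x2'' /reach0 reach2] := descent_f2 R iso1.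
have [d reach3] := descent_e2 R x1' x2''.
by exists d; apply: reach_trans reach1 (reach_trans reach2 reach3).
Qed.

Lemma isotropic_normal_form v : isotropic_vec v ->
  exists g c, [/\ tOplus_unit R g, c != 0 & v *m gQ g = c *: e1Q].
Proof.
case=> v0 vv; have [k [z [k0 zkv]]] := row_clear_denominators v.
have kQ : (k%:~R : rat) != 0 by rewrite intr_eq0.
have [d [g [g_unit zg _]]] := reach_isotropic_e1 (isotropic_int_row zkv vv).
have vg : v *m gQ g = (d%:~R / k%:~R) *: e1Q.
  rewrite -[v](scalerK kQ) -zkv -scalemxAl -map_mxM zg (map_vecL_e1e2 d 0).
  by rewrite mulr0z scale0r addr0 scalerA mulrC.
exists g, (d%:~R / k%:~R); split=> //.
rewrite mulf_neq0 ?invr_eq0 // intr_eq0; apply: contraNneq v0 => d0.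
have [h [_ gh]] := tOplus_unit_inv g_unit.
by rewrite -[v]mulmx1 -gQ1 -gh gQM mulmxA vg d0 mul0r scale0r mul0mx.
Qed.

Lemma isotropic_perp_e1_normal_form u : bfQ u u = 0 -> bfQ u e1Q = 0 ->
  exists g a b,
    [/\ tOplus_unit R g, e1Q *m gQ g = e1Q & u *m gQ g = a *: e1Q + b *: e2Q].
Proof.
move=> uu ue; have [k [z [k0 zku]]] := row_clear_denominators u.
have kQ : (k%:~R : rat) != 0 by rewrite intr_eq0.
have z_iso := isotropic_int_row zku uu.
have [X [y1 [x2 [y2 [a1 [a2 zE]]]]]] := vecL_coord z.
have y10 : y1 = 0.
  have <- : bf GramL z e1 = y1 by rewrite zE bf_vecL; ring.
  by apply/eqP; rewrite -(@intr_eq0 rat) -bf_GramF zku bfZl ue mulr0.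
rewrite zE y10 in z_iso; have [x2' [g [g_unit zg e1g]]] := descent_f2 R z_iso.
exists g, (X%:~R / k%:~R), (x2'%:~R / k%:~R); split=> //.
  by rewrite /gQ -map_mxM e1g.
rewrite -[u](scalerK kQ) -zku -scalemxAl -map_mxM zE y10 zg map_vecL_e1e2.
by rewrite scalerDr !scalerA ![_^-1 * _]mulrC.
Qed.

(* After moving the first row of A to a multiple of e1, the second row lies in
   e1^perp and is moved into span(e1, e2) by the stabiliser of e1. *)
Lemma plane_normal_form A : tot_isotropic_plane A ->
  exists g, tOplus_unit R g /\ (A *m gQ g :=: P0)%MS.
Proof.
case=> rkA isoA.
have bfA i j : bfQ (row i A) (row j A) = 0 by rewrite -gram_entry_bf isoA mxE.
set r0 := row 0 A; set r1 := row 1 A.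
have AE : A = col_mx r0 r1 := col_mx_rows2 A.
have AM M : A *m M = col_mx (r0 *m M) (r1 *m M).
  by rewrite {1}AE; exact (mul_col_mx r0 r1 M).
have r0_0 : r0 != 0.
  apply/eqP => r00; move: rkA; rewrite AE r00 => rk0.
  by have := rank_col_mx_le1 (sub0mx 1 r1) (submx_refl r1); rewrite rk0.
have [g1 [c [g1_unit c0 r0g1]]] := isotropic_normal_form (conj r0_0 (bfA 0 0)).
have isog1 := tOplus_unit_gQ_isometry g1_unit.
have ue : bfQ (r1 *m gQ g1) e1Q = 0.
  have /eqP := isog1 r1 r0; rewrite r0g1 bfA bfZr mulf_eq0 (negbTE c0).
  exact/eqP.
have uu : bfQ (r1 *m gQ g1) (r1 *m gQ g1) = 0 by rewrite isog1 bfA.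
have [g2 [a [b [g2_unit e1g2 ug2]]]] := isotropic_perp_e1_normal_form uu ue.
have g_unit := tOplus_unitM g1_unit g2_unit.
have Ag : A *m gQ (g1 *m g2) = col_mx (c *: e1Q) (a *: e1Q + b *: e2Q).
  by rewrite AM gQM !mulmxA r0g1 -scalemxAl e1g2 ug2.
have b0 : b != 0.
  apply/eqP => b0; move: rkA.
  rewrite -(mxrankMfree _ (tOplus_unit_gQ_row_free g_unit)) Ag b0.
  rewrite scale0r addr0 => rk0.
  have e1Q_sub (x : rat) : (x *: e1Q <= e1Q)%MS by apply/scalemx_sub/submx_refl.
  by have := rank_col_mx_le1 (e1Q_sub c) (e1Q_sub a); rewrite rk0.
by exists (g1 *m g2); split=> //; rewrite Ag; apply: span_e1_e2.
Qed.

Lemma transitive_of_normal_form m (P : 'M[rat]_(m, 6) -> Prop) (N : 'M[rat]_(m, 6)) :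
  (forall X, P X -> exists g, tOplus_unit R g /\ (X *m gQ g :=: N)%MS) ->
  forall X Y, P X -> P Y -> exists g, in_tildeOplus R g /\ (X *m gQ g == Y)%MS.
Proof.
move=> normal_form X Y /normal_form[g1 [g1_unit XN]] /normal_form[g2 [g2_unit YN]].
have [h [h_unit g2h]] := tOplus_unit_inv g2_unit.
have [h' [g_in _ _ _]] := tOplus_unitM g1_unit h_unit.
exists (g1 *m h); split=> //; apply/eqmxP.
have YE : Y = Y *m gQ g2 *m gQ h by rewrite -mulmxA -gQM g2h gQ1 mulmx1.
rewrite gQM mulmxA [X in (_ :=: X)%MS]YE.
exact: eqmx_trans (eqmxMr _ XN) (eqmx_sym (eqmxMr _ YN)).
Qed.

End NormalForms.

Theorem mainTheorem9 (R : realType) :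
  (* transitivity on isotropic lines *)
  (forall v w : 'rV[rat]_6, isotropic_vec v -> isotropic_vec w ->
     exists g : 'M[int]_6, in_tildeOplus R g /\ (v *m gQ g == w)%MS) /\
  (* transitivity on totally isotropic planes *)
  (forall A B : 'M[rat]_(2, 6), tot_isotropic_plane A -> tot_isotropic_plane B ->
     exists g : 'M[int]_6, in_tildeOplus R g /\ (A *m gQ g == B)%MS) /\
  (* the building is nonempty: one line-node, one plane-node, joined by an edge *)
  (exists (v : 'rV[rat]_6) (A : 'M[rat]_(2, 6)),
     isotropic_vec v /\ tot_isotropic_plane A /\ (v <= A)%MS).
Proof.
split; [|split].
- apply: (transitive_of_normal_form (N := e1Q)) => v /(isotropic_normal_form R).
  case=> g [c [g_unit c0 vg]]; exists g; split=> //.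
  by rewrite vg; apply: eqmx_scale.
- exact: (transitive_of_normal_form (plane_normal_form R)).
- exists e1Q, P0; split; first exact: e1Q_isotropic.
  split; first by split; [exact: P0_rank | exact: P0_gram].
  exact: e1Q_sub_P0.
Qed.
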